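(* Let $(S,d)$ be a finite metric space, let $f\in\operatorname{ext}(B^S_{\mathrm{BL}})$ and let $x\in S\setminus M_f$. Then there exists $y\in S\setminus\{x\}$ such that $|f(x)-f(y)|=|f|_L\,d(x,y)$.
   Context: $\mathrm{BL}(S)$ is the space of real-valued (bounded Lipschitz) functions on $S$, $|f|_L=\sup_{x\neq y}|f(x)-f(y)|/d(x,y)$, $\|f\|_{\mathrm{BL}}=\|f\|_\infty+|f|_L$, $B^S_{\mathrm{BL}}=\{f\in\mathrm{BL}(S):\|f\|_{\mathrm{BL}}\le1\}$, $\operatorname{ext}$ denotes extreme points, and $M_f=\{x\in S:|f(x)|=\|f\|_\infty\}$. *)

From HB Require Import structures.
From mathcomp Require Import all_boot all_order all_algebra.
From mathcomp Require Import reals.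
Set Implicit Arguments. Unset Strict Implicit. Unset Printing Implicit Defensive.
Import Order.TTheory GRing.Theory Num.Theory.
Local Open Scope ring_scope.

Definition is_metric (R : realType) (S : finType) (d : S -> S -> R) : Prop :=
  (forall x y, 0 <= d x y) /\
  (forall x y, d x y = 0 <-> x = y) /\
  (forall x y, d x y = d y x) /\
  (forall x y z, d x z <= d x y + d y z).

(* sup norm ||f||_oo = sup_x |f x| (a max over the finite set S; 0 if S empty) *)
Definition sup_norm (R : realType) (S : finType) (f : S -> R) : R :=
  \big[Num.max/0]_(x : S) `|f x|.

(* Lipschitz constant |f|_L = sup_{x <> y} |f x - f y| / d x y
   (a max over finitely many pairs; 0 if there is no such pair) *)
Definition lip_const (R : realType) (S : finType) (d : S -> S -> R) (f : S -> R) : R :=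
  \big[Num.max/0]_(p : S * S | p.1 != p.2) (`|f p.1 - f p.2| / d p.1 p.2).

Definition bl_norm (R : realType) (S : finType) (d : S -> S -> R) (f : S -> R) : R :=
  sup_norm f + lip_const d f.

Definition in_BL_ball (R : realType) (S : finType) (d : S -> S -> R) (f : S -> R) : Prop :=
  bl_norm d f <= 1.

Definition is_extreme_point (R : realType) (S : finType) (B : (S -> R) -> Prop)
    (f : S -> R) : Prop :=
  B f /\
  forall (g h : S -> R) (t : R), B g -> B h -> 0 < t < 1 ->
    (forall s, f s = t * g s + (1 - t) * h s) -> forall s, g s = h s.

Definition norming_set (R : realType) (S : finType) (f : S -> R) (x : S) : Prop :=
  `|f x| = sup_norm f.

(* Suppose no y attains the Lipschitz slope at x.  As S is finite and x is
   not a norming point, there is an eps > 0 such that |f x| + eps <= ||f||_oo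
   and |f x - f y| + eps <= |f|_L d(x,y) for every y <> x.  Moving the value
   of f at x by +eps or by -eps then increases neither the sup norm nor the
   Lipschitz constant, so both perturbations lie in the ball, and f is their
   midpoint: this contradicts extremality. *)
From HB Require Import structures.
From mathcomp Require Import all_boot all_order all_algebra.
From mathcomp Require Import reals.
From mathcomp Require Import lra.
Set Implicit Arguments. Unset Strict Implicit. Unset Printing Implicit Defensive.
Import Order.TTheory GRing.Theory Num.Theory.
Local Open Scope ring_scope.

Lemma finite_pos_lower_bound (R : realFieldType) (T : finType) (g : T -> R) :
  (forall t, 0 < g t) -> exists2 eps : R, 0 < eps & forall t, eps <= g t.
Proof.
move=> g_gt0; exists (\big[Num.min/1]_t g t); last by move=> t; exact: bigmin_le.
by elim/big_ind: _ => // a b a0 b0; rewrite lt_min a0 b0.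
Qed.

Lemma extreme_point_midpoint (R : realType) (S : finType) (B : (S -> R) -> Prop)
    (f g h : S -> R) :
  is_extreme_point B f -> B g -> B h -> (forall s, f s = (g s + h s) / 2) ->
  forall s, g s = h s.
Proof.
move=> [_ f_ext] Bg Bh f_mid.
apply: (f_ext g h 2^-1) => //; first by apply/andP; split; lra.
by move=> s; rewrite f_mid; lra.
Qed.

Definition shift_at (T : eqType) (R : zmodType) (f : T -> R) (x : T) (e : R) :
    T -> R :=
  fun s => if s == x then f x + e else f s.

Section SupNorm.
Variables (R : realType) (S : finType).

Lemma le_sup_norm (f : S -> R) (s : S) : `|f s| <= sup_norm f.
Proof. exact: (le_bigmax _ (fun s => `|f s|)). Qed.

Lemma sup_norm_shift_at (f : S -> R) (x : S) (e : R) :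
  `|f x| + `|e| <= sup_norm f -> sup_norm (shift_at f x e) <= sup_norm f.
Proof.
move=> hx; apply/bigmax_leP; split; first exact: le_trans (le_sup_norm f x).
move=> s _; rewrite /shift_at; case: eqP => _; last exact: le_sup_norm.
exact: le_trans (ler_normD _ _) hx.
Qed.

End SupNorm.

Section LipConst.
Variables (R : realType) (S : finType) (d : S -> S -> R).
Hypothesis hd : is_metric d.

Lemma metric_gt0 (a b : S) : a != b -> 0 < d a b.
Proof.
have [d_ge0 [d_eq0 _]] := hd.
by move=> ab; rewrite lt_def d_ge0 andbT; apply: contra ab => /eqP /d_eq0 ->.
Qed.

Lemma lip_const_ge0 (f : S -> R) : 0 <= lip_const d f.
Proof.
rewrite /lip_const; elim/big_ind: _ => // [a b a0 _ | [a b] /= ab].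
  by rewrite le_max a0.
by rewrite divr_ge0 // ltW // metric_gt0.
Qed.

Lemma le_lip_const (f : S -> R) (a b : S) :
  a != b -> `|f a - f b| <= lip_const d f * d a b.
Proof.
move=> ab; rewrite -ler_pdivrMr ?metric_gt0 //.
exact: (le_bigmax_cond (j := (a, b)) _
  (fun p : S * S => `|f p.1 - f p.2| / d p.1 p.2)).
Qed.

Lemma lip_const_le (f : S -> R) (c : R) :
  0 <= c -> (forall a b, a != b -> `|f a - f b| <= c * d a b) ->
  lip_const d f <= c.
Proof.
move=> c_ge0 hc; apply/bigmax_leP; split => // [[a b]] /= ab.
by rewrite ler_pdivrMr ?metric_gt0 ?hc.
Qed.

Lemma lip_const_shift_at (f : S -> R) (x : S) (e : R) :
  (forall y, y != x -> `|f x - f y| + `|e| <= lip_const d f * d x y) ->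
  lip_const d (shift_at f x e) <= lip_const d f.
Proof.
have [_ [_ [d_sym _]]] := hd.
move=> hx; apply: lip_const_le (lip_const_ge0 f) _.
have shifted y : y != x -> `|f x + e - f y| <= lip_const d f * d x y.
  move=> yx; apply: le_trans (hx y yx).
  by rewrite addrAC; apply: le_trans (ler_normD _ _) _.
move=> a b; rewrite /shift_at.
have [-> | ax] := eqVneq a x; have [-> | bx] := eqVneq b x.
- by [].
- by rewrite shifted.
- by rewrite distrC d_sym shifted.
- exact: le_lip_const.
Qed.

Lemma in_BL_ball_shift_at (f : S -> R) (x : S) (e : R) :
  in_BL_ball d f -> `|f x| + `|e| <= sup_norm f ->
  (forall y, y != x -> `|f x - f y| + `|e| <= lip_const d f * d x y) ->
  in_BL_ball d (shift_at f x e).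
Proof.
move=> f_ball hsup hlip; apply: le_trans f_ball.
by rewrite lerD ?sup_norm_shift_at ?lip_const_shift_at.
Qed.

Lemma extreme_point_no_slack (f : S -> R) (x : S) (eps : R) :
  is_extreme_point (in_BL_ball d) f -> 0 < eps ->
  `|f x| + eps <= sup_norm f ->
  (forall y, y != x -> `|f x - f y| + eps <= lip_const d f * d x y) ->
  False.
Proof.
move=> f_ext eps_gt0 hsup hlip.
have shift_in_ball e : `|e| = eps -> in_BL_ball d (shift_at f x e).
  by move=> e_eps; apply: in_BL_ball_shift_at; rewrite ?e_eps //; exact: f_ext.1.
have f_mid s : f s = (shift_at f x eps s + shift_at f x (- eps) s) / 2.
  by rewrite /shift_at; case: eqP => [-> |]; lra.
have := extreme_point_midpoint f_ext (shift_in_ball eps (gtr0_norm eps_gt0))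
  (shift_in_ball (- eps) _) f_mid x.
by rewrite normrN gtr0_norm // /shift_at eqxx => /(_ erefl); lra.
Qed.

End LipConst.

Theorem lemma6p2 (R : realType) (S : finType) (d : S -> S -> R)
  (hd : is_metric d) (f : S -> R)
  (hf : is_extreme_point (in_BL_ball d) f)
  (x : S) (hx : ~ norming_set f x) :
  exists y : S, y != x /\ `|f x - f y| = lip_const d f * d x y.
Proof.
case: (boolP [exists y, (y != x) && (`|f x - f y| == lip_const d f * d x y)]).
  by move=> /existsP [y /andP [yx /eqP slope]]; exists y.
rewrite negb_exists => /forallP no_slope.
pose gap y := if y == x then sup_norm f - `|f x|
              else lip_const d f * d x y - `|f x - f y|.
have [eps eps_gt0 eps_le] : exists2 eps : R, 0 < eps & forall y, eps <= gap y.
  apply: finite_pos_lower_bound => y; rewrite /gap.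
  case: eqP => [_ | /eqP yx]; rewrite subr_gt0 lt_neqAle.
    by rewrite le_sup_norm andbT; apply/eqP.
  have xy : x != y by rewrite eq_sym.
  rewrite (le_lip_const hd f xy) andbT.
  by apply: contraNneq (no_slope y) => ->; rewrite yx eqxx.
have hsup : `|f x| + eps <= sup_norm f.
  by move: (eps_le x); rewrite /gap eqxx; lra.
have hlip y : y != x -> `|f x - f y| + eps <= lip_const d f * d x y.
  by move=> yx; move: (eps_le y); rewrite /gap (negbTE yx); lra.
by case: (extreme_point_no_slack hd hf eps_gt0 hsup hlip).
Qed.
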